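(* Let $(\mathrm{Con},\sqsubseteq,(s_i)_{i\in G})$ be a spatial constraint system with distributed spaces $(\Delta_I)_{I\subseteq G}$. For all $c,e\in\mathrm{Con}$ and $I,J\subseteq G$: (1) $c\sqsupseteq\Delta_I(e)$ if and only if $\Pi_I(c)\sqsupseteq e$; (2) $\Pi_I(c)\sqsupseteq\Pi_J(c)$ if $J\subseteq I$; (3) $\Pi_I(c)\sqsupseteq\pi_I(c)$.
   Context: A constraint system (cs) is a complete lattice $(\mathrm{Con},\sqsubseteq)$ with join $\sqcup$, meet $\sqcap$, bottom $\mathit{true}$, top $\mathit{false}$. A space function is a continuous (directed-join preserving) self-map $f$ on $\mathrm{Con}$ with $f(\mathit{true})=\mathit{true}$ and $f(c\sqcup d)=f(c)\sqcup f(d)$; $\mathcal{S}(\mathrm{Con})$ denotes the set of space functions ordered pointwise ($f\preceq g$ iff $f(c)\sqsubseteq g(c)$ for all $c$). A spatial constraint system $(\mathrm{Con},\sqsubseteq,(s_i)_{i\in G})$ is a cs with space functions $s_i$ indexed by an arbitrary set $G$. Distributed spaces: $\Delta_I=\max\{f\in\mathcal{S}(\mathrm{Con}) : f\preceq s_i\text{ for all }i\in I\}$ (this maximum exists). Agent projection: $\pi_i(c)=\bigsqcup\{e : c\sqsupseteq s_i(e)\}$; join projection: $\pi_I(c)=\bigsqcup\{\pi_i(c): i\in I\}$; group projection: $\Pi_I(c)=\bigsqcup\{e : c\sqsupseteq\Delta_I(e)\}$. *)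

Set Implicit Arguments.

(** Complete lattice: a partial order in which every subset (a predicate)
    has a least upper bound. Order [le x y] is [x ⊑ y]. *)
Record CLattice := {
  carrier :> Type;
  le : carrier -> carrier -> Prop;
  le_refl : forall x, le x x;
  le_trans : forall x y z, le x y -> le y z -> le x z;
  le_antisym : forall x y, le x y -> le y x -> x = y;
  sup : (carrier -> Prop) -> carrier;
  sup_ub : forall (S : carrier -> Prop) x, S x -> le x (sup S);
  sup_least : forall (S : carrier -> Prop) y,
      (forall x, S x -> le x y) -> le (sup S) y
}.

Arguments le {c} _ _.
Arguments sup {c} _.

Section Defs.
Variable C : CLattice.

Definition join (c d : C) : C := sup (fun x => x = c \/ x = d).
Definition ctrue : C := sup (fun _ => False).

Definition directed (S : C -> Prop) : Prop :=
  (exists x, S x) /\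
  forall x y, S x -> S y -> exists z, S z /\ le x z /\ le y z.

Definition continuous (f : C -> C) : Prop :=
  forall S : C -> Prop, directed S ->
    f (sup S) = sup (fun y => exists x, S x /\ y = f x).

Definition space_fun (f : C -> C) : Prop :=
  continuous f /\ f ctrue = ctrue /\ forall c d, f (join c d) = join (f c) (f d).

Definition fle (f g : C -> C) : Prop := forall c, le (f c) (g c).

Definition is_max (P : (C -> C) -> Prop) (m : C -> C) : Prop :=
  P m /\ forall f, P f -> fle f m.

Variable G : Type.

Definition is_distributed_space (s : G -> C -> C) (I : G -> Prop) (D : C -> C) : Prop :=
  is_max (fun f => space_fun f /\ forall i, I i -> fle f (s i)) D.

Definition agent_proj (s : G -> C -> C) (i : G) (c : C) : C :=
  sup (fun e => le (s i e) c).

Definition join_proj (s : G -> C -> C) (I : G -> Prop) (c : C) : C :=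
  sup (fun x => exists i, I i /\ x = agent_proj s i c).

Definition group_proj (Delta : (G -> Prop) -> C -> C) (I : G -> Prop) (c : C) : C :=
  sup (fun e => le (Delta I e) c).

End Defs.

Set Implicit Arguments.

(* Π_I(c) is the right adjoint of Δ_I at c: since Δ_I maps true to true and
   preserves binary joins, { e | Δ_I(e) ⊑ c } is directed, so by continuity
   its join again lies in it, which is (1).  Passing to right adjoints reverses
   the pointwise order, and maximality of Δ gives Δ_I ⪯ Δ_J for J ⊆ I and
   Δ_I ⪯ s_i for i ∈ I; this yields (2) and (3). *)

Section SpaceFunctions.
Variable C : CLattice.

Definition right_adjoint (f : C -> C) (c : C) : C := sup (fun e => le (f e) c).

Lemma join_ub_l (a b : C) : le a (join C a b).
Proof. apply sup_ub; auto. Qed.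

Lemma join_ub_r (a b : C) : le b (join C a b).
Proof. apply sup_ub; auto. Qed.

Lemma join_least (a b c : C) : le a c -> le b c -> le (join C a b) c.
Proof. intros Ha Hb. apply sup_least. intros x [-> | ->]; assumption. Qed.

Lemma join_absorb_r (a b : C) : le a b -> join C a b = b.
Proof.
  intros Hab. apply le_antisym.
  - apply join_least; [assumption | apply le_refl].
  - apply join_ub_r.
Qed.

Lemma ctrue_least (c : C) : le (ctrue C) c.
Proof. apply sup_least. intros _ []. Qed.

Variable f : C -> C.
Hypothesis Hf : space_fun C f.

Lemma space_fun_monotone (a b : C) : le a b -> le (f a) (f b).
Proof.
  destruct Hf as [_ [_ Hjoin]]. intros Hab.
  rewrite <- (join_absorb_r _ _ Hab), Hjoin. apply join_ub_l.
Qed.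

Lemma space_fun_le_directed (c : C) : directed C (fun e => le (f e) c).
Proof.
  destruct Hf as [_ [Htrue Hjoin]]. split.
  - exists (ctrue C). rewrite Htrue. apply ctrue_least.
  - intros x y Hx Hy. exists (join C x y).
    split; [| split; [apply join_ub_l | apply join_ub_r]].
    rewrite Hjoin. apply join_least; assumption.
Qed.

Lemma space_fun_right_adjoint_le (c : C) : le (f (right_adjoint f c)) c.
Proof.
  destruct Hf as [Hcont _]. unfold right_adjoint.
  rewrite (Hcont _ (space_fun_le_directed c)).
  apply sup_least. intros y [x [Hx ->]]. exact Hx.
Qed.

Lemma space_fun_galois (c e : C) : le (f e) c <-> le e (right_adjoint f c).
Proof.
  split.
  - intros He. apply sup_ub. exact He.
  - intros He. eapply le_trans.
    + apply space_fun_monotone. exact He.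
    + apply space_fun_right_adjoint_le.
Qed.

End SpaceFunctions.

Lemma right_adjoint_antitone (C : CLattice) (f g : C -> C) (c : C) :
  fle C f g -> le (right_adjoint C g c) (right_adjoint C f c).
Proof.
  intros Hfg. apply sup_least. intros e He. apply sup_ub.
  eapply le_trans; [apply Hfg | exact He].
Qed.

Section DistributedSpaces.
Variables (C : CLattice) (G : Type) (s : G -> C -> C).
Variable Delta : (G -> Prop) -> C -> C.
Hypothesis HDelta : forall I : G -> Prop, is_distributed_space C s I (Delta I).

Lemma distributed_space_space_fun (I : G -> Prop) : space_fun C (Delta I).
Proof. apply (HDelta I). Qed.

Lemma distributed_space_le (I : G -> Prop) (i : G) : I i -> fle C (Delta I) (s i).
Proof. apply (HDelta I). Qed.

Lemma distributed_space_antitone (I J : G -> Prop) :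
  (forall j, J j -> I j) -> fle C (Delta I) (Delta J).
Proof.
  intros HJI. apply (HDelta J). split.
  - apply distributed_space_space_fun.
  - intros j Hj. apply distributed_space_le, HJI, Hj.
Qed.

End DistributedSpaces.

Theorem mainTheorem3 (C : CLattice) (G : Type) (s : G -> C -> C)
  (Hs : forall i, space_fun C (s i))
  (Delta : (G -> Prop) -> C -> C)
  (HDelta : forall I : G -> Prop, is_distributed_space C s I (Delta I)) :
  forall (c e : C) (I J : G -> Prop),
    (le (Delta I e) c <-> le e (group_proj C Delta I c)) /\
    ((forall j, J j -> I j) -> le (group_proj C Delta J c) (group_proj C Delta I c)) /\
    le (join_proj C s I c) (group_proj C Delta I c).
Proof.
  (* Only Δ_I needs to be a space function, and that is part of [HDelta]. *)
  clear Hs. intros c e I J.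
  split; [| split].
  - apply space_fun_galois, (distributed_space_space_fun _ HDelta).
  - intros HJI. apply right_adjoint_antitone.
    apply (distributed_space_antitone _ HDelta), HJI.
  - apply sup_least. intros x [i [Hi ->]].
    apply right_adjoint_antitone, (distributed_space_le _ HDelta), Hi.
Qed.
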